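(* Let $N^h\ge 2$ be an integer and $h=1/N^h$. Let $\lambda_j=j^2\pi^2$ be the $j$-th exact eigenvalue of $-u''=\lambda u$ on $(0,1)$ with $u(0)=u(1)=0$, and let $\lambda^h_{gsq,j}$ be the $j$-th approximate eigenvalue (eigenvalues sorted in nondecreasing order, counting multiplicity) of the linear GSFEMBQ generalized matrix eigenvalue problem $(\mathbf{K}-\eta_K\mathbf{S})\mathbf{U}=\lambda^h(\alpha\mathbf{M}_G+(1-\alpha)\mathbf{M}_L+\eta_M\mathbf{S}_g)\mathbf{U}$ described in the context, with $\eta_K=\frac{31}{252}$, $\eta_M=\frac{23}{3780}$ and $\alpha=\frac{26}{21}$. Then \[ \frac{|\lambda^h_{gsq,j}-\lambda_j|}{\lambda_j}<\frac{1}{30240}(j\pi h)^8\qquad\text{for all } j\in\{1,\dots,N^h-1\}. \]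
   Context: Setting (linear finite elements, generalized SoftFEM with blended quadrature, in 1D): Let $x_k=kh$, $k=0,\dots,N^h$, be a uniform mesh of $[0,1]$. Let $V^h$ be the space of continuous functions on $[0,1]$ that are affine on each $[x_{k-1},x_k]$ and vanish at $0$ and $1$, with hat basis $\phi_k$, $k=1,\dots,N^h-1$, $\phi_k(x_l)=\delta_{kl}$. For $v\in V^h$ and an interior node $x_k$ let $[\![v']\!](x_k)=v'(x_k^-)-v'(x_k^+)$. Define $a(v,w)=\int_0^1 v'w'\,dx$, $s(v,w)=\sum_{k=1}^{N^h-1} h\,[\![v']\!](x_k)[\![w']\!](x_k)$, $s_g(v,w)=\sum_{k=1}^{N^h-1} h^3\,[\![v']\!](x_k)[\![w']\!](x_k)$, $\mathbf{K}_{kl}=a(\phi_l,\phi_k)$, $\mathbf{S}_{kl}=s(\phi_l,\phi_k)$, $(\mathbf{S}_g)_{kl}=s_g(\phi_l,\phi_k)$. $\mathbf{M}_G$ is the mass matrix $\int_0^1\phi_l\phi_k\,dx$ computed elementwise by the 2-point Gauss–Legendre rule, and $\mathbf{M}_L$ the one computed by the 2-point Gauss–Lobatto (trapezoidal) rule. Explicitly, $\mathbf{K}=\frac1h\,\mathrm{tridiag}(-1,2,-1)$, $\mathbf{M}_G=h\,\mathrm{tridiag}(\tfrac16,\tfrac23,\tfrac16)$, $\mathbf{M}_L=h\,\mathbf{I}$, $\mathbf{S}=\frac1h$ times the symmetric pentadiagonal matrix with rows $(1,-4,6,-4,1)$ except that the first and last diagonal entries are $5$, and $\mathbf{S}_g=h^2\mathbf{S}$;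 all are $(N^h-1)\times(N^h-1)$. *)

From HB Require Import structures.
From mathcomp Require Import all_boot all_order all_algebra.
From mathcomp Require Import reals trigo.
Set Implicit Arguments. Unset Strict Implicit. Unset Printing Implicit Defensive.
Import Order.TTheory GRing.Theory Num.Theory.
Local Open Scope ring_scope.

Section GSFEM.
Variable R : realType.

(* Matrix index i : 'I_n with n = N^h - 1 corresponds to the interior node
   x_k with k = i+1.  Mesh size h = 1/N^h. *)

Definition tridiag (n : nat) (o d : R) : 'M[R]_n :=
  \matrix_(i, j) (if i == j then d
                  else if (i.+1 == j :> nat) || (j.+1 == i :> nat) then o else 0).

(* slope of the hat function phi_k on element [x_(e-1), x_e], e = 1..N *)
Definition dphi (h : R) (k e : nat) : R :=
  if e == k then h^-1 else if e == k.+1 then - h^-1 else 0.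

(* jump [[phi_k']](x_m) = phi_k'(x_m^-) - phi_k'(x_m^+) *)
Definition jump (h : R) (k m : nat) : R := dphi h k m - dphi h k m.+1.

Definition Kmat (n : nat) (h : R) : 'M[R]_n := h^-1 *: tridiag n (-1) 2.
Definition MGmat (n : nat) (h : R) : 'M[R]_n := h *: tridiag n (1/6) (2/3).
Definition MLmat (n : nat) (h : R) : 'M[R]_n := h *: 1%:M.

(* S_kl = s(phi_l, phi_k) = sum_{m=1}^{N-1} h [[phi_l']](x_m) [[phi_k']](x_m) *)
Definition Smat (n : nat) (h : R) : 'M[R]_n :=
  \matrix_(i, j) \sum_(m < n) h * jump h j.+1 m.+1 * jump h i.+1 m.+1.
Definition Sgmat (n : nat) (h : R) : 'M[R]_n :=
  \matrix_(i, j) \sum_(m < n) h ^+ 3 * jump h j.+1 m.+1 * jump h i.+1 m.+1.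

Definition gen_eigs (n : nat) (A B : 'M[R]_n) (lam : 'I_n -> R) : Prop :=
  (forall i j : 'I_n, (i <= j)%N -> lam i <= lam j) /\
  (forall x : R, \det (A - x *: B) = \det B * \prod_(i < n) (lam i - x)).

Definition gsq_A (n : nat) (h etaK : R) : 'M[R]_n := Kmat n h - etaK *: Smat n h.
Definition gsq_B (n : nat) (h etaM alpha : R) : 'M[R]_n :=
  alpha *: MGmat n h + (1 - alpha) *: MLmat n h + etaM *: Sgmat n h.

End GSFEM.

From mathcomp Require Import all_boot all_order all_algebra.
From mathcomp Require Import reals trigo topology normedtype sequences.
From mathcomp Require Import ring lra zify.
Import Order.TTheory GRing.Theory Num.Theory.
Import numFieldNormedType.Exports.
Local Open Scope ring_scope.

(* The sine vectors [(sin (k θ_p))_k], [θ_p = (p + 1) π h], are common left eigenvectors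
   of all symmetric tridiagonal Toeplitz matrices, hence of K, S, M_G, M_L and S_g, and
   they form a basis.  The generalized eigenvalues are therefore [r(μ_p) / h^2], with
   [μ_p = 2 - 2 cos θ_p] and [r(μ) = (μ - η_K μ^2) / (1 - α μ / 6 + η_M μ^2)]; [r]
   increases on [[0, 4]], so this list is sorted, and a sorted list of generalized
   eigenvalues is unique.  As [λ_j = θ_j^2 / h^2], the estimate is the scalar inequality
   [|r(2 - 2 cos t) - t^2| < t^10 / 30240] for [0 < t < π].  Bracketing [cos t] between
   its Taylor polynomials of degrees 10 and 12 and using the monotonicity of [r] reduces
   it to two polynomial inequalities in [y = t^2 ∈ (0, (16/5)^2]]: in both the
   coefficients of [y^0, ..., y^4] cancel (the eighth order of the scheme), and the
   quotient by [y^5] has nonnegative Bernstein coefficients. *)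

Lemma sorted_eq_of_prod (R : numFieldType) n (l1 l2 : 'I_n -> R) :
  (forall i j : 'I_n, (i <= j)%N -> l1 i <= l1 j) ->
  (forall i j : 'I_n, (i <= j)%N -> l2 i <= l2 j) ->
  (forall x, \prod_i (l1 i - x) = \prod_i (l2 i - x)) -> l1 =1 l2.
Proof.
move=> l1_sorted l2_sorted prod_eq.
pose P (l : 'I_n -> R) := \prod_(x <- map l (enum 'I_n)) ('X - x%:P).
have P_horner l x : (P l).[x] = (-1) ^+ n * \prod_i (l i - x).
  rewrite /P horner_prod big_map big_enum /=.
  under eq_bigr do rewrite hornerXsubC -opprB.
  by rewrite prodrN card_ord.
have P_eq : P l1 = P l2.
  apply/eqP; rewrite -subr_eq0; apply/eqP.
  apply: (@roots_geq_poly_eq0 _ _ [seq k%:R | k <- iota 0 (size (P l1 - P l2))]).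
  - by apply/allP => x _; rewrite /root hornerD hornerN !P_horner prod_eq subrr.
  - by rewrite map_inj_uniq ?iota_uniq // => a b /eqP; rewrite eqr_nat => /eqP.
  - by rewrite size_map size_iota.
have sorted_enum (l : 'I_n -> R) : (forall i j : 'I_n, (i <= j)%N -> l i <= l j) ->
    sorted <=%R (map l (enum 'I_n)).
  move=> l_sorted; rewrite sorted_map.
  have : sorted (relpre val leq) (enum 'I_n) by rewrite -sorted_map val_enum_ord iota_sorted.
  by apply: sub_sorted => a b; exact: l_sorted.
have := sorted_eq (@le_trans _ R) (@le_anti _ R) (sorted_enum _ l1_sorted)
  (sorted_enum _ l2_sorted) (prod_XsubC_eq P_eq).
move=> /(congr1 (fun s => nth 0 s _)) l_eq i; have := l_eq i.
by rewrite !(nth_map i) -?enumT ?nth_ord_enum ?size_enum_ord.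
Qed.

Section GSFEMEigenvalues.
Variable R : realType.
Implicit Types (o d h : R).

(** * Taylor bounds for the cosine *)

Definition cos_poly (n : nat) (y : R) : R :=
  \sum_(i < n) (-1) ^+ i * y ^+ i / (i.*2)`!%:R.

(* [(2 i)!] as a product of small numerals, which [field] and [lra] can evaluate
   after [simpl]. *)
Fixpoint fact_doubleR (i : nat) : R :=
  if i is i'.+1 then (2 * i'%:R + 1) * (2 * i'%:R + 2) * fact_doubleR i' else 1.

Lemma cos_polyE n y :
  cos_poly n y = \sum_(i < n) (-1) ^+ i * y ^+ i / fact_doubleR i.
Proof.
have natr_fact_double i : (i.*2)`!%:R = fact_doubleR i.
  elim: i => //= i <-; rewrite doubleS !factS !natrM -[i.*2.+2]addn2 -[i.*2.+1]addn1.
  by rewrite !natrD -mul2n natrM; ring.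
by apply: eq_bigr => i _; rewrite natr_fact_double.
Qed.

Lemma fact_doubleR_gt0 i : 0 < fact_doubleR i.
Proof.
elim: i => //= i IH; have i_ge0 : 0 <= i%:R :> R := ler0n _ _.
by rewrite !mulr_gt0 //; lra.
Qed.

Lemma cos_polyS n y :
  cos_poly n.+1 y = cos_poly n y + (-1) ^+ n * y ^+ n / fact_doubleR n.
Proof. by rewrite !cos_polyE big_ord_recr. Qed.

Lemma cos_poly_sqr n (x : R) : cos_poly n (x ^+ 2) = \sum_(0 <= i < n) cos_coeff' x i.
Proof.
rewrite big_mkord; apply: eq_bigr => i _.
by rewrite /cos_coeff' -exprM mul2n -exprnP.
Qed.

Lemma cos_coeff'_pair_gt0 (x : R) k : x != 0 -> x ^+ 2 < 30 -> (2 <= k)%N ->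
  0 < (-1) ^+ k * (cos_coeff' x k + cos_coeff' x k.+1).
Proof.
move=> x_neq0 x_sqr_lt k_ge2.
have fact_neq0 i : i`!%:R != 0 :> R by rewrite pnatr_eq0 -lt0n fact_gt0.
have -> : (-1) ^+ k * (cos_coeff' x k + cos_coeff' x k.+1) =
    x ^+ k.*2 / (k.*2)`!%:R * (1 - x ^+ 2 / ((k.*2.+2)%:R * (k.*2.+1)%:R)).
  rewrite /cos_coeff' -!exprnP [(-1) ^+ k.+1]exprS doubleS !factS !natrM !exprSr.
  rewrite -signr_odd; case: (odd k); rewrite ?expr1 ?expr0; field;
    by rewrite fact_neq0 nat1r -natrD !pnatr_eq0 addn_eq0.
have xk_gt0 : 0 < x ^+ k.*2 by rewrite -mul2n exprM exprn_gt0 // lt_def sqrf_eq0 x_neq0 sqr_ge0.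
have k_ge : 30 <= (k.*2.+2)%:R * (k.*2.+1)%:R :> R.
  by rewrite -natrM ler_nat -!addnn; apply: (@leq_mul 6 5); lia.
rewrite mulr_gt0 ?divr_gt0 ?ltr0n ?fact_gt0 // subr_gt0 ltr_pdivrMr ?mul1r.
  exact: lt_le_trans x_sqr_lt k_ge.
by rewrite -natrM ltr0n.
Qed.

Lemma cos_poly_lt_cos m (x : R) : (0 < m)%N -> x != 0 -> x ^+ 2 < 30 ->
  cos_poly m.*2 (x ^+ 2) < cos x.
Proof.
move=> m_gt0 x_neq0 x_sqr_lt; have cvg_cos := @cvg_cos_coeff' R x.
rewrite -(cvg_lim (@Rhausdorff R) cvg_cos) cos_poly_sqr.
apply: lt_sum_lim_series; first by move/cvgP: cvg_cos.
move=> d; rewrite addnS -doubleD.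
have := @cos_coeff'_pair_gt0 x (m + d).*2 x_neq0 x_sqr_lt.
by rewrite -signr_odd odd_double expr0 mul1r; apply; rewrite -addnn; lia.
Qed.

Lemma cos_lt_cos_poly m (x : R) : (0 < m)%N -> x != 0 -> x ^+ 2 < 30 ->
  cos x < cos_poly m.*2.+1 (x ^+ 2).
Proof.
move=> m_gt0 x_neq0 x_sqr_lt; have /cvgN cvg_cos := @cvg_cos_coeff' R x.
rewrite -ltrN2 -(cvg_lim (@Rhausdorff R) cvg_cos) cos_poly_sqr -sumrN -seriesN.
apply: lt_sum_lim_series; first by move/cvgP: cvg_cos; rewrite seriesN.
move=> d; rewrite addnS addSn -doubleD -opprD.
have := @cos_coeff'_pair_gt0 x (m + d).*2.+1 x_neq0 x_sqr_lt.
by rewrite -signr_odd /= odd_double expr1 mulN1r; apply; rewrite -addnn; lia.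
Qed.

Lemma pi_lt_16_5 : pi < 16 / 5 :> R.
Proof.
have cos_8_5_lt0 : cos (8 / 5) < 0 :> R.
  have c_neq0 : 8 / 5 != 0 :> R by apply: lt0r_neq0; lra.
  have c_sqr_lt : (8 / 5) ^+ 2 < 30 :> R by rewrite expr2; lra.
  have := @cos_lt_cos_poly 1 _ isT c_neq0 c_sqr_lt.
  have -> : cos_poly 1.*2.+1 ((8 / 5) ^+ 2) = - 13 / 1875 :> R.
    by rewrite -[1.*2.+1]/3%N cos_polyE !big_ord_recr big_ord0 /=; field.
  lra.
rewrite ltNge; apply/negP => pi_ge.
suff : 0 <= cos (8 / 5) :> R by lra.
by apply: cos_ge0_pihalf; lra.
Qed.

(** * The discrete dispersion relation *)

Definition gsq_num (m : R) : R := m - 31 / 252 * m ^+ 2.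
Definition gsq_den (m : R) : R := 1 - 13 / 63 * m + 23 / (4 * 27 * 35) * m ^+ 2.
Definition gsq_ratio (m : R) : R := gsq_num m / gsq_den m.

Lemma gsq_den_gt0 (m : R) : -1 / 100 <= m -> m <= 401 / 100 -> 0 < gsq_den m.
Proof. by move=> m_ge m_le; rewrite /gsq_den; nra. Qed.

(* The range contains [[0, 4]] and the perturbed arguments [2 - 2 * cos_poly _ y]
   of [gsq_ratio_near_sqr]. *)
Lemma gsq_ratio_lt (l m : R) : -1 / 100 <= l -> l < m -> m <= 401 / 100 ->
  gsq_ratio l < gsq_ratio m.
Proof.
move=> l_ge lm m_le.
have den_l_gt0 : 0 < gsq_den l by apply: gsq_den_gt0; lra.
have den_m_gt0 : 0 < gsq_den m by apply: gsq_den_gt0; lra.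
rewrite /gsq_ratio ltr_pdivrMr // mulrAC ltr_pdivlMr //.
have -> : gsq_num m * gsq_den l = gsq_num l * gsq_den m +
    (m - l) * (1 - 31 / 252 * (m + l) + (31 / 252 * (13 / 63) - 23 / (4 * 27 * 35)) * m * l).
  by rewrite /gsq_num /gsq_den; ring.
rewrite ltrDl mulr_gt0 ?subr_gt0 //; nra.
Qed.

(* Numerals of [R] are casts of unary naturals, so large constants are written as
   lists of base-1000 digits. *)
Definition base1000 (ds : seq nat) : R := foldl (fun x k => x * 1000 + k%:R) 0 ds.

Definition ratios (ps : seq (seq nat * seq nat)) : seq R :=
  [seq base1000 p.1 / base1000 p.2 | p <- ps].

Lemma ratios_ge0 ps : all (fun c => 0 <= c) (ratios ps).
Proof.
have base1000_ge0 ds : 0 <= base1000 ds.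
  rewrite /base1000; suff foldl_ge0 (a : R) : 0 <= a -> 0 <= foldl (fun x k => x * 1000 + k%:R) a ds.
    exact: foldl_ge0.
  by elim: ds a => //= d ds IH a a_ge0; rewrite IH // addr_ge0 ?mulr_ge0 ?ler0n.
by apply/allP => _ /mapP[p _ ->]; rewrite divr_ge0.
Qed.

(* Bernstein form, with the binomial coefficients absorbed into [b]. *)
Fixpoint bernstein (b : seq R) (s : R) : R :=
  if b is c :: b' then c * (1 - s) ^+ size b' + s * bernstein b' s else 0.

Lemma bernstein_ge0 b s : all (fun c => 0 <= c) b -> 0 <= s <= 1 -> 0 <= bernstein b s.
Proof.
move=> + /andP[s_ge0 s_le1]; elim: b => //= c b IH /andP[c_ge0 b_ge0].
by rewrite addr_ge0 ?mulr_ge0 ?exprn_ge0 ?subr_ge0 ?IH.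
Qed.

(* Exact coefficients of the quotients by [y ^+ 5] in the two certificates below. *)
Definition gsq_lower_coeffs : seq R := ratios [::
  ([:: 157], [:: 9; 525; 600]);
  ([:: 280; 31], [:: 1; 964; 655; 0]);
  ([:: 272; 426; 177], [:: 491; 163; 750; 0]);
  ([:: 554; 983; 603], [:: 434; 109; 375; 0]);
  ([:: 102; 177; 910; 104; 301], [:: 52; 744; 289; 62; 500; 0]);
  ([:: 11; 77; 965; 146; 681; 537], [:: 5; 439; 254; 809; 570; 312; 500]);
  ([:: 100; 464; 397; 433; 511; 317], [:: 64; 753; 33; 447; 265; 625; 0]);
  ([:: 513; 265; 292; 631; 164; 518; 37], [:: 560; 923; 152; 236; 938; 476; 562; 500]);
  ([:: 3; 280; 49; 290; 22; 282; 364; 5; 759], [:: 7; 67; 631; 718; 185; 424; 804; 687; 500; 0]);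
  ([:: 3; 162; 874; 774; 361; 104; 616; 327; 333], [:: 14; 724; 232; 746; 219; 635; 9; 765; 625; 0]);
  ([:: 2; 694; 342; 242; 23; 851; 660; 623; 728; 399], [:: 33; 129; 523; 678; 994; 178; 771; 972; 656; 250; 0]);
  ([:: 24; 935; 919; 88; 812; 503; 799; 739; 753; 39], [:: 1; 242; 357; 137; 962; 281; 703; 948; 974; 609; 375; 0]);
  ([:: 846; 195; 20; 495; 79; 364; 555; 304; 203; 703], [:: 372; 707; 141; 388; 684; 511; 184; 692; 382; 812; 500; 0])]%N.
Definition gsq_upper_coeffs : seq R := ratios [::
  ([:: 473], [:: 9; 525; 600]);
  ([:: 841], [:: 2; 41; 200]);
  ([:: 418; 68; 193], [:: 267; 907; 500; 0]);
  ([:: 20; 817; 307; 549], [:: 5; 860; 476; 562; 500]);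
  ([:: 141; 994; 399; 975; 327], [:: 26; 372; 144; 531; 250; 0]);
  ([:: 1; 124; 340; 324; 467; 167], [:: 197; 791; 83; 984; 375; 0]);
  ([:: 449; 178; 350; 857; 893; 269], [:: 105; 959; 509; 277; 343; 750; 0]);
  ([:: 682; 379; 638; 915; 0; 843], [:: 309; 48; 568; 725; 585; 937; 500]);
  ([:: 14; 982; 778; 496; 720; 728; 404; 427], [:: 19; 470; 59; 829; 711; 914; 62; 500; 0]);
  ([:: 13; 150; 8; 158; 925; 690; 91; 873], [:: 81; 125; 249; 290; 466; 308; 593; 750; 0]);
  ([:: 8; 575; 159; 345; 383; 445; 670; 8; 43], [:: 547; 595; 432; 710; 647; 583; 7; 812; 500; 0])]%N.

Lemma gsq_lower_certificate (y : R) :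
  gsq_num (2 - 2 * cos_poly 7 y) - (y - y ^+ 5 / (32 * 27 * 35)) * gsq_den (2 - 2 * cos_poly 7 y)
  = y ^+ 5 * bernstein gsq_lower_coeffs (25 / 256 * y).
Proof.
rewrite /gsq_num /gsq_den cos_polyE !big_ord_recr big_ord0 /= /base1000 /foldl.
by field.
Qed.

Lemma gsq_upper_certificate (y : R) :
  (y + y ^+ 5 / (32 * 27 * 35)) * gsq_den (2 - 2 * cos_poly 6 y) - gsq_num (2 - 2 * cos_poly 6 y)
  = y ^+ 5 * bernstein gsq_upper_coeffs (25 / 256 * y).
Proof.
rewrite /gsq_num /gsq_den cos_polyE !big_ord_recr big_ord0 /= /base1000 /foldl.
by field.
Qed.

Lemma gsq_ratio_near_sqr (y c : R) : 0 < y -> y <= 256 / 25 -> -1 <= c -> c <= 1 ->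
  cos_poly 6 y < c -> c < cos_poly 7 y ->
  `|gsq_ratio (2 - 2 * c) - y| < y ^+ 5 / (32 * 27 * 35).
Proof.
move=> y_gt0 y_le c_ge c_le c_gt c_lt.
set K := y ^+ 5 / (32 * 27 * 35).
have gap : cos_poly 7 y - cos_poly 6 y <= 1 / 250.
  rewrite cos_polyS addrC addKr ler_pdivrMr ?fact_doubleR_gt0 // -signr_odd /= expr0 mul1r.
  have : y ^+ 6 <= (256 / 25) ^+ 6 by rewrite lerXn2r ?nnegrE //; lra.
  lra.
have s_in : 0 <= 25 / 256 * y <= 1 by apply/andP; split; lra.
have y5_ge0 : 0 <= y ^+ 5 by rewrite exprn_ge0 // ltW.
have lower : y - K <= gsq_ratio (2 - 2 * cos_poly 7 y).
  have den_gt0 : 0 < gsq_den (2 - 2 * cos_poly 7 y) by apply: gsq_den_gt0; lra.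
  rewrite /gsq_ratio ler_pdivlMr // -subr_ge0 gsq_lower_certificate.
  by rewrite mulr_ge0 // bernstein_ge0 ?ratios_ge0.
have upper : gsq_ratio (2 - 2 * cos_poly 6 y) <= y + K.
  have den_gt0 : 0 < gsq_den (2 - 2 * cos_poly 6 y) by apply: gsq_den_gt0; lra.
  rewrite /gsq_ratio ler_pdivrMr // -subr_ge0 gsq_upper_certificate.
  by rewrite mulr_ge0 // bernstein_ge0 ?ratios_ge0.
have mono_l : gsq_ratio (2 - 2 * cos_poly 7 y) < gsq_ratio (2 - 2 * c).
  by apply: gsq_ratio_lt; lra.
have mono_u : gsq_ratio (2 - 2 * c) < gsq_ratio (2 - 2 * cos_poly 6 y).
  by apply: gsq_ratio_lt; lra.
rewrite ltr_distl; apply/andP; split; lra.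
Qed.

Lemma gsq_ratio_cos_near (t : R) : 0 < t -> t < pi ->
  `|gsq_ratio (2 - 2 * cos t) - t ^+ 2| < (t ^+ 2) ^+ 5 / (32 * 27 * 35).
Proof.
move=> t_gt0 t_lt_pi; have t_neq0 : t != 0 by rewrite gt_eqF.
have t_sqr_le : t ^+ 2 <= 256 / 25 by have := pi_lt_16_5; rewrite expr2; nra.
have t_sqr_lt : t ^+ 2 < 30 by lra.
apply: gsq_ratio_near_sqr (cos_geN1 t) (cos_le1 t) _ _; rewrite ?exprn_gt0 //.
- exact: cos_poly_lt_cos 3 _ isT t_neq0 t_sqr_lt.
- exact: cos_lt_cos_poly 3 _ isT t_neq0 t_sqr_lt.
Qed.

(** * Tridiagonal matrices *)

Lemma tridiagC n o d i j : tridiag n o d i j = tridiag n o d j i.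
Proof. by rewrite !mxE [j == i]eq_sym orbC. Qed.

Lemma tridiag_tr n o d : (tridiag n o d)^T = tridiag n o d.
Proof. by apply/matrixP => i j; rewrite mxE tridiagC. Qed.

Lemma tridiagE n o d (i j : 'I_n) : tridiag n o d i j =
  (if i == j :> nat then d else 0) + (if i == j.+1 :> nat then o else 0) +
  (if i.+1 == j :> nat then o else 0).
Proof.
rewrite mxE -val_eqE /=; move: (i : nat) (j : nat) => {}i {}j.
case: (i =P j) => ?; case: (i.+1 =P j) => ?; case: (j.+1 =P i) => ?; case: (i =P j.+1) => ?;
  rewrite /= ?addr0 ?add0r //; exfalso; lia.
Qed.

Lemma row_mul_tridiag n o d c (V : nat -> R) :
  V 0 = 0 -> V n.+1 = 0 -> (forall k, V k + V k.+2 = c * V k.+1) ->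
  (\row_(k < n) V k.+1) *m tridiag n o d = (d + o * c) *: \row_(k < n) V k.+1.
Proof.
move=> V0 Vn VS; apply/rowP => k; rewrite !mxE.
under eq_bigr do rewrite tridiagE !mxE !mulrDr !(fun_if (GRing.mul _)) !mulr0.
rewrite !big_split /= -!big_mkcond (big_ord1_eq _ (fun i => V i.+1 * d)).
rewrite (big_ord1_eq _ (fun i => V i.+1 * o)) ltn_ord.
have -> : (if (k.+1 < n)%N then V k.+2 * o else 0) = V k.+2 * o.
  by case: ltnP => // k_ge; rewrite (_ : k.+2 = n.+1) ?Vn ?mul0r //; have := ltn_ord k; lia.
have -> : \sum_(i < n | i.+1 == k :> nat) V i.+1 * o = V k * o.
  case: k => [[|k] k_lt] /=; last by rewrite (big_ord1_eq _ (fun i => V i.+1 * o)) ltnW.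
  by rewrite V0 mul0r big_pred0.
rewrite mulrDl -mulrA -VS; ring.
Qed.

Lemma jump_tridiag n h (i j : 'I_n) : jump h i.+1 j.+1 = h^-1 * tridiag n (-1) 2 i j.
Proof.
rewrite mxE /jump /dphi -val_eqE /= !eqSS; move: (i : nat) (j : nat) => {}i {}j.
case: (j =P i) => ?; case: (j =P i.+1) => ?; case: (j.+1 =P i) => ?; case: (i =P j) => ?;
  case: (i.+1 =P j) => ? /=; rewrite ?addr0 ?add0r ?mulr0; try (exfalso; lia); ring.
Qed.

Lemma Smat_tridiag n h : h != 0 -> Smat n h = h^-1 *: (tridiag n (-1) 2 *m tridiag n (-1) 2).
Proof.
move=> h_neq0; apply/matrixP => i j; rewrite !mxE big_distrr /=.
apply: eq_bigr => m _; rewrite !jump_tridiag [tridiag _ _ _ m j]tridiagC.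
by field.
Qed.

Lemma Sgmat_Smat n h : Sgmat n h = h ^+ 2 *: Smat n h.
Proof. by apply/matrixP => i j; rewrite !mxE big_distrr /=; apply: eq_bigr => m _; ring. Qed.

(** * Sine modes *)

Definition mode_angle (n p : nat) : R := (p.+1)%:R * pi / (n.+1)%:R.

Definition sine_mode (n p : nat) : 'rV[R]_n :=
  \row_(k < n) sin (k.+1%:R * mode_angle n p).

Lemma sin_natr_pi k : sin (k%:R * pi) = 0 :> R.
Proof. by elim: k => [|k IH]; rewrite ?mul0r ?sin0 // -natr1 mulrDl mul1r sinDpi IH oppr0. Qed.

Lemma sine_mode_tridiag n p o d :
  sine_mode n p *m tridiag n o d = (d + o * (2 * cos (mode_angle n p))) *: sine_mode n p.
Proof.
set t := mode_angle n p.
apply: (@row_mul_tridiag n o d _ (fun m => sin (m%:R * t))) => [|| k] /=.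
- by rewrite mul0r sin0.
- rewrite /t /mode_angle mulrC divfK ?pnatr_eq0 //.
  exact: sin_natr_pi.
- have -> : k%:R * t = k.+1%:R * t - t by rewrite mulrSr; ring.
  have -> : k.+2%:R * t = k.+1%:R * t + t by rewrite mulrSr; ring.
  by rewrite sinB sinD; ring.
Qed.

Lemma mode_angle_gt0 n p : 0 < mode_angle n p.
Proof. by rewrite /mode_angle !mulr_gt0 ?invr_gt0 ?ltr0n ?pi_gt0. Qed.

Lemma mode_angle_lt_pi n p : (p < n)%N -> mode_angle n p < pi.
Proof.
by move=> pn; rewrite /mode_angle ltr_pdivrMr ?ltr0n // mulrC ltr_pM2l ?pi_gt0 ?ltr_nat.
Qed.

Lemma mode_angle_lt n p q : (p < q)%N -> mode_angle n p < mode_angle n q.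
Proof.
by move=> pq; rewrite /mode_angle ltr_pM2r ?invr_gt0 ?ltr0n // ltr_pM2r ?pi_gt0 // ltr_nat ltnS.
Qed.

Lemma cos_mode_angle_lt n p q : (p < q)%N -> (q < n)%N ->
  cos (mode_angle n q) < cos (mode_angle n p).
Proof.
move=> pq qn; have in_0pi r : (r < n)%N -> mode_angle n r \in `[0, pi].
  by move=> rn; rewrite in_itv /= !ltW ?mode_angle_gt0 ?mode_angle_lt_pi.
by rewrite ltr_cos ?in_0pi ?mode_angle_lt // (ltn_trans pq).
Qed.

Lemma sine_mode_orthogonal {n} {p q : 'I_n} : p != q ->
  sine_mode n p *m (sine_mode n q)^T = 0.
Proof.
move=> pq; set u := sine_mode n p; set v := sine_mode n q.
have : (u *m tridiag n 1 0) *m v^T = u *m (v *m tridiag n 1 0)^T.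
  by rewrite trmx_mul tridiag_tr mulmxA.
rewrite !sine_mode_tridiag -scalemxAl linearZ /= -scalemxAr => /eqP.
rewrite -subr_eq0 -scalerBl scalemx_eq0 !add0r !mul1r subr_eq0 => /orP[|/eqP //].
have [lt_pq|lt_qp|/val_inj eq_pq] := ltngtP p q; last by rewrite eq_pq eqxx in pq.
- by rewrite gt_eqF // ltr_pM2l // cos_mode_angle_lt.
- by rewrite lt_eqF // ltr_pM2l // cos_mode_angle_lt.
Qed.

Lemma sine_mode_norm_gt0 n (p : 'I_n) : 0 < (sine_mode n p *m (sine_mode n p)^T) 0 0.
Proof.
have n_gt0 : (0 < n)%N by apply: leq_ltn_trans (ltn_ord p).
rewrite !mxE (bigD1 (Ordinal n_gt0)) //= ltr_pwDl ?sumr_ge0 // => [|k _].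
  rewrite !mxE -expr2 exprn_gt0 // mul1r sin_gt0_pi //.
  by rewrite mode_angle_gt0 mode_angle_lt_pi.
by rewrite !mxE -expr2 sqr_ge0.
Qed.

Definition sine_modes n : 'M[R]_n := \matrix_(p < n) sine_mode n p.

Lemma det_sine_modes_neq0 n : \det (sine_modes n) != 0.
Proof.
have WWt : sine_modes n *m (sine_modes n)^T =
    diag_mx (\row_p (sine_mode n p *m (sine_mode n p)^T) 0 0).
  apply/matrixP => p q; rewrite !mxE.
  have [<-|pq] := eqVneq p q; rewrite ?mulr1n ?mulr0n.
    by apply: eq_bigr => k _; rewrite !mxE.
  have /matrixP/(_ 0 0) := sine_mode_orthogonal pq; rewrite !mxE => orth.
  by apply: etrans orth; apply: eq_bigr => k _; rewrite !mxE.
apply/eqP => /(congr1 (fun x => x * \det (sine_modes n)^T)).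
rewrite mul0r -det_mulmx WWt det_diag => /eqP; apply/negP.
by rewrite lt0r_neq0 // prodr_gt0 // => p _; rewrite mxE sine_mode_norm_gt0.
Qed.

(** * Spectrum of the GSFEMBQ pencil *)

Lemma gen_eigs_uniq n (A B : 'M[R]_n) l1 l2 : \det B != 0 ->
  gen_eigs A B l1 -> gen_eigs A B l2 -> l1 =1 l2.
Proof.
move=> B_neq0 [l1_sorted l1_det] [l2_sorted l2_det].
apply: sorted_eq_of_prod l1_sorted l2_sorted _ => x.
by apply: (mulfI B_neq0); rewrite -l1_det l2_det.
Qed.

Lemma det_left_eigenbasis n (W M : 'M[R]_n) (s : 'I_n -> R) : \det W != 0 ->
  (forall p, row p W *m M = s p *: row p W) -> \det M = \prod_p s p.
Proof.
move=> W_neq0 eig.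
have WM : W *m M = diag_mx (\row_p s p) *m W.
  apply/row_matrixP => p; rewrite row_mul eig mul_diag_mx.
  by apply/rowP => k; rewrite !mxE.
move/(congr1 determinant): WM; rewrite !det_mulmx det_diag mulrC => /(mulIf W_neq0) ->.
by apply: eq_bigr => p _; rewrite mxE.
Qed.

Section LeftEigenvectors.
Variables (n : nat) (v : 'rV[R]_n).

Lemma left_eig1 : v *m 1%:M = 1 *: v.
Proof. by rewrite mulmx1 scale1r. Qed.

Lemma left_eigZ s M a : v *m M = a *: v -> v *m (s *: M) = (s * a) *: v.
Proof. by move=> vM; rewrite -scalemxAr vM scalerA. Qed.

Lemma left_eigD M1 M2 a1 a2 :
  v *m M1 = a1 *: v -> v *m M2 = a2 *: v -> v *m (M1 + M2) = (a1 + a2) *: v.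
Proof. by move=> vM1 vM2; rewrite mulmxDr vM1 vM2 scalerDl. Qed.

Lemma left_eigB M1 M2 a1 a2 :
  v *m M1 = a1 *: v -> v *m M2 = a2 *: v -> v *m (M1 - M2) = (a1 - a2) *: v.
Proof. by move=> vM1 vM2; rewrite mulmxBr vM1 vM2 scalerBl. Qed.

Lemma left_eigM M1 M2 a1 a2 :
  v *m M1 = a1 *: v -> v *m M2 = a2 *: v -> v *m (M1 *m M2) = (a1 * a2) *: v.
Proof. by move=> vM1 vM2; rewrite mulmxA vM1 -scalemxAl vM2 scalerA. Qed.

End LeftEigenvectors.

Arguments left_eig1 {n} v.
Arguments left_eigZ {n v} s {M a}.
Arguments left_eigD {n v M1 M2 a1 a2}.
Arguments left_eigB {n v M1 M2 a1 a2}.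
Arguments left_eigM {n v M1 M2 a1 a2}.

Definition laplacian_eig (n p : nat) : R := 2 - 2 * cos (mode_angle n p).

Lemma laplacian_eig_bounds n p : 0 <= laplacian_eig n p <= 4.
Proof.
have := cos_geN1 (mode_angle n p : R); have := cos_le1 (mode_angle n p : R).
by rewrite /laplacian_eig => ? ?; apply/andP; split; lra.
Qed.

Lemma sine_mode_laplacian n p :
  sine_mode n p *m tridiag n (-1) 2 = laplacian_eig n p *: sine_mode n p.
Proof. by rewrite sine_mode_tridiag /laplacian_eig; congr (_ *: _); ring. Qed.

Section Pencil.
Variables (n : nat) (h : R).
Hypothesis h_neq0 : h != 0.

Let A := gsq_A n h (31 / 252).
Let B := gsq_B n h (23 / (4 * 27 * 35)) (26 / 21).

Lemma sine_mode_gsq_A p :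
  sine_mode n p *m A = (gsq_num (laplacian_eig n p) / h) *: sine_mode n p.
Proof.
have L := sine_mode_laplacian n p.
have := left_eigB (left_eigZ h^-1 L) (left_eigZ (31 / 252) (left_eigZ h^-1 (left_eigM L L))).
rewrite /A /gsq_A /Kmat (Smat_tridiag _ _ h_neq0) => ->.
by congr (_ *: _); rewrite /gsq_num; field.
Qed.

Lemma sine_mode_gsq_B p :
  sine_mode n p *m B = (h * gsq_den (laplacian_eig n p)) *: sine_mode n p.
Proof.
have L := sine_mode_laplacian n p.
have := left_eigD (left_eigD (left_eigZ (26 / 21) (left_eigZ h (sine_mode_tridiag n p (1 / 6) (2 / 3))))
  (left_eigZ (1 - 26 / 21) (left_eigZ h (left_eig1 (sine_mode n p)))))
  (left_eigZ (23 / (4 * 27 * 35)) (left_eigZ (h ^+ 2) (left_eigZ h^-1 (left_eigM L L)))).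
rewrite /B /gsq_B /MGmat /MLmat Sgmat_Smat (Smat_tridiag _ _ h_neq0) => ->.
by congr (_ *: _); rewrite /gsq_den /laplacian_eig; field.
Qed.

Definition gsq_eig p : R := gsq_ratio (laplacian_eig n p) / h ^+ 2.

Lemma gsq_den_laplacian_gt0 p : 0 < gsq_den (laplacian_eig n p).
Proof. by have := laplacian_eig_bounds n p; move=> /andP[? ?]; apply: gsq_den_gt0; lra. Qed.

Lemma det_gsq_B : \det B = \prod_(p < n) (h * gsq_den (laplacian_eig n p)).
Proof.
apply: det_left_eigenbasis (det_sine_modes_neq0 n) _ => p.
by rewrite rowK sine_mode_gsq_B.
Qed.

Lemma det_gsq_B_neq0 : \det B != 0.
Proof.
rewrite det_gsq_B; apply/prodf_neq0 => p _.
by rewrite mulf_neq0 // lt0r_neq0 // gsq_den_laplacian_gt0.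
Qed.

Lemma gen_eigs_gsq : gen_eigs A B gsq_eig.
Proof.
split=> [p q|x].
  rewrite leq_eqVlt => /orP[/eqP/val_inj -> //|pq].
  rewrite ler_pM2r ?invr_gt0 ?exprn_even_gt0 //= ?h_neq0 // ltW // gsq_ratio_lt //.
  - by have /andP[? ?] := laplacian_eig_bounds n p; lra.
  - by rewrite /laplacian_eig ltrD2l ltrN2 ltr_pM2l // cos_mode_angle_lt.
  - by have /andP[? ?] := laplacian_eig_bounds n q; lra.
rewrite det_gsq_B -big_split /=.
apply: det_left_eigenbasis (det_sine_modes_neq0 n) _ => p.
rewrite rowK mulmxBr sine_mode_gsq_A -scalemxAr sine_mode_gsq_B scalerA -scalerBl.
congr (_ *: _); rewrite /gsq_eig /gsq_ratio.
by field; rewrite h_neq0 lt0r_neq0 ?gsq_den_laplacian_gt0.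
Qed.

End Pencil.

Lemma gsq_eig_rel_error n (j : 'I_n) (h := (n.+1)%:R^-1 : R) :
  `|gsq_eig n h j - ((j.+1)%:R * pi) ^+ 2| / ((j.+1)%:R * pi) ^+ 2
    < ((j.+1)%:R * pi * h) ^+ 8 / (32 * 27 * 35).
Proof.
have h_neq0 : h != 0 by rewrite invr_eq0 pnatr_eq0.
have -> : (j.+1)%:R * pi * h = mode_angle n j by [].
set t := mode_angle n j; have t_neq0 : t != 0 by rewrite gt_eqF ?mode_angle_gt0.
have -> : ((j.+1)%:R * pi) ^+ 2 = t ^+ 2 / h ^+ 2.
  by rewrite /t /mode_angle /h; field; rewrite nat1r pnatr_eq0.
rewrite /gsq_eig /laplacian_eig -/t -mulrBl normrM [`|h ^- 2|]ger0_norm ?invr_ge0 ?sqr_ge0 //.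
have -> : forall e : R, e * h ^- 2 / (t ^+ 2 / h ^+ 2) = e / t ^+ 2.
  by move=> e; field; rewrite h_neq0 t_neq0.
rewrite ltr_pdivrMr ?exprn_gt0 ?mode_angle_gt0 //.
have -> : t ^+ 8 / (32 * 27 * 35) * t ^+ 2 = (t ^+ 2) ^+ 5 / (32 * 27 * 35) by ring.
exact: gsq_ratio_cos_near (mode_angle_gt0 n j) (mode_angle_lt_pi _ _ (ltn_ord j)).
Qed.

End GSFEMEigenvalues.

Arguments gen_eigs_uniq {R n A B l1 l2}.

Theorem theorem3 (R : realType) (N : nat) (HN : (2 <= N)%N) :
  let h : R := N%:R^-1 in
  let A := gsq_A N.-1 h (31 / 252) in
  let B := gsq_B N.-1 h (23 / (4 * 27 * 35)) (26 / 21) in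
  (exists lam : 'I_N.-1 -> R, gen_eigs A B lam) /\
  (forall lam : 'I_N.-1 -> R, gen_eigs A B lam ->
     forall j : 'I_N.-1,
       let lamj : R := ((j.+1)%:R * pi) ^+ 2 in
       `|lam j - lamj| / lamj < ((j.+1)%:R * pi * h) ^+ 8 / (32 * 27 * 35)).
Proof.
case: N HN => [//|n] _ h A B /=.
have h_neq0 : h != 0 by rewrite invr_eq0 pnatr_eq0.
split; first by exists (gsq_eig R n h); exact: gen_eigs_gsq R n h h_neq0.
move=> lam lam_eigs j.
rewrite (gen_eigs_uniq (det_gsq_B_neq0 R n h h_neq0) lam_eigs (gen_eigs_gsq R n h h_neq0)).
exact: gsq_eig_rel_error.
Qed.
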